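(* For $n\ge 0$ let $S_n$ be the lattice of order ideals of the shifted staircase poset $\{(i,j)\in\mathbb Z^2:1\le i\le j\le n\}$ (componentwise order), ordered by inclusion. Then \[ \sum_{n=0}^\infty \d(S_n)\,x^n = \frac{8x\left(1+\sqrt{1-4x}-x\big(3+\sqrt{1-4x}\big)\right)}{(1-4x)\big(1-4x+\sqrt{1-4x}\big)^3}. \]
   Context: For a finite poset $Q$, $\d(Q)=\sum_{(p,q)\in Q\times Q}\d(p,q)$ is the Wiener index of its Hasse diagram, where $\d(p,q)$ is the graph distance in the Hasse diagram (edges = cover relations) and the sum runs over ordered pairs. $S_0$ has a single element. *)

From mathcomp Require Import all_boot.
Set Implicit Arguments.
Unset Strict Implicit.
Unset Printing Implicit Defensive.

Definition pt (n : nat) := ('I_n * 'I_n)%type.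

(* Shifted staircase poset {(i,j) : 1 <= i <= j <= n}, shifted to 0-based
   coordinates {(i,j) : 0 <= i <= j < n}. *)
Definition stair (n : nat) : {set pt n} := [set p : pt n | (p.1 <= p.2)%N].

Definition le_pt (n : nat) (q p : pt n) : bool := (q.1 <= p.1)%N && (q.2 <= p.2)%N.

Definition order_ideal (n : nat) (I : {set pt n}) : bool :=
  (I \subset stair n) &&
  [forall p in I, forall q in stair n, le_pt q p ==> (q \in I)].

Definition S (n : nat) : {set {set pt n}} := [set I | order_ideal I].

Definition covers (n : nat) (I J : {set pt n}) : bool :=
  [&& I \in S n, J \in S n, I \proper J &
      ~~ [exists K in S n, (I \proper K) && (K \proper J)]].

Definition hasse_adj (n : nat) : rel {set pt n} :=
  fun I J => covers I J || covers J I.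

Definition walk_of_len (n : nat) (I J : {set pt n}) (k : nat) : bool :=
  [exists p : k.-tuple {set pt n}, path (@hasse_adj n) I p && (last I p == J)].

(* Any shortest walk has fewer than #|S n| edges, so searching
   k in [0, #|S n|) finds the true minimum whenever I, J are connected
   (the Hasse diagram of a finite lattice is connected). *)
Definition hdist (n : nat) (I J : {set pt n}) : nat :=
  find (walk_of_len I J) (iota 0 #|S n|).

(* Wiener index of the Hasse diagram of S_n, over ordered pairs. *)
Definition wiener_S (n : nat) : nat :=
  \sum_(I in S n) \sum_(J in S n) hdist I J.

From mathcomp Require Import all_boot zify.
Set Implicit Arguments.
Unset Strict Implicit.
Unset Printing Implicit Defensive.

(* An order ideal meets the diagonal j - i = d in the cells with i < c_d,
   where c_0 >= c_1 >= ... >= c_(n-1) >= 0 decrease by at most one at each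
   step; recording where they decrease gives a bijection from bit strings s
   of length n onto S_n under which c_d is the number of ones of s at
   positions >= d.  Covers in S_n add one cell, and two ideals are joined
   through their intersection, so the Hasse distance is the size of the
   symmetric difference, i.e. sum_d |c_d(s) - c_d(t)|.  Summing over all
   pairs of strings, splitting off the first bit, yields
   3 d(S_n) = n (2n+1) C(2n,n), hence (n+1) d(S_(n+2)) = (4n+10) d(S_(n+1)).
   For V(x) = sum_n d(S_(n+1)) x^n this recurrence reads (1-4x) V' = 10 V,
   so V(x) = 2 (1-4x)^(-5/2), and the stated series is x V(x). *)

Fixpoint bitseqs (n : nat) : seq bitseq :=
  if n is n'.+1 then map (cons true) (bitseqs n') ++ map (cons false) (bitseqs n')
  else [:: [::]].

Lemma cons_inj (T : Type) (x : T) : injective (cons x).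
Proof. by move=> s t []. Qed.

Lemma mem_bitseqs n s : (s \in bitseqs n) = (size s == n).
Proof.
elim: n s => [|n IH] [|b s] //=; rewrite mem_cat.
  by apply/negbTE/norP; split; apply/mapP => -[].
rewrite eqSS -IH; case: b.
- have -> : (true :: s \in map (cons false) (bitseqs n)) = false by apply/mapP => -[].
  by rewrite orbF (mem_map (@cons_inj _ true)).
- have -> : (false :: s \in map (cons true) (bitseqs n)) = false by apply/mapP => -[].
  by rewrite (mem_map (@cons_inj _ false)).
Qed.

Lemma uniq_bitseqs n : uniq (bitseqs n).
Proof.
elim: n => //= n IH; rewrite cat_uniq !map_inj_uniq ?IH ?andbT /=; try exact: cons_inj.
by apply/hasPn => _ /mapP [t _ ->]; apply/mapP => -[].
Qed.

Lemma size_bitseqs n : size (bitseqs n) = 2 ^ n.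
Proof. by elim: n => //= n IH; rewrite size_cat !size_map IH expnS mul2n addnn. Qed.

Lemma sum_bitseqsS n (F : bitseq -> nat) :
  \sum_(s <- bitseqs n.+1) F s = \sum_(s <- bitseqs n) (F (true :: s) + F (false :: s)).
Proof. by rewrite /= big_cat !big_map big_split. Qed.

Lemma sum2_bitseqsS n (F : bitseq -> bitseq -> nat) :
  \sum_(s <- bitseqs n.+1) \sum_(t <- bitseqs n.+1) F s t =
  \sum_(s <- bitseqs n) \sum_(t <- bitseqs n)
     (F (true :: s) (true :: t) + F (true :: s) (false :: t) +
      F (false :: s) (true :: t) + F (false :: s) (false :: t)).
Proof.
rewrite sum_bitseqsS; apply: eq_bigr => s _.
by rewrite !sum_bitseqsS -big_split; apply: eq_bigr => t _ /=; lia.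
Qed.

Notation ones s := (count id s).

Lemma sum_bitseqs_ones n (f : nat -> nat) :
  \sum_(s <- bitseqs n) f (ones s) = \sum_(k < n.+1) 'C(n, k) * f k.
Proof.
elim: n f => [|n IH] f; first by rewrite /= big_seq1 big_ord_recl big_ord0 /= mul1n addn0.
rewrite sum_bitseqsS big_split /= (IH (fun k => f k.+1)) IH.
rewrite [RHS]big_ord_recl [in RHS](eq_bigr (fun i : 'I_n.+1 =>
  'C(n, i) * f i.+1 + 'C(n, i.+1) * f i.+1)); last first.
  by move=> i _; rewrite lift0 binS mulnDl addnC.
rewrite big_split /= [in RHS]addnCA; congr (_ + _).
by rewrite big_ord_recl [in RHS]big_ord_recr /= !bin0 bin_small // mul0n addn0.
Qed.

Definition distn (a b : nat) : nat := (a - b) + (b - a).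

Definition ones_from (d : nat) (s : bitseq) : nat := ones (drop d s).

Definition pairs_same (n : nat) : nat :=
  \sum_(s <- bitseqs n) \sum_(t <- bitseqs n) (ones s == ones t).
Definition pairs_gap (n : nat) : nat :=
  \sum_(s <- bitseqs n) \sum_(t <- bitseqs n) distn (ones s) (ones t).
Definition pairs_profile_gap (n : nat) : nat :=
  \sum_(s <- bitseqs n) \sum_(t <- bitseqs n)
    \sum_(d < n) distn (ones_from d s) (ones_from d t).

Lemma pairs_same_val n : pairs_same n = 'C(n + n, n).
Proof.
rewrite /pairs_same (eq_bigr (fun s => \sum_(k < n.+1) 'C(n, k) * (ones s == k))); last first.
  by move=> s _; rewrite -(sum_bitseqs_ones n (fun k => (ones s == k) : nat)).
rewrite (sum_bitseqs_ones n (fun c => \sum_(k < n.+1) 'C(n, k) * (c == k))).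
rewrite -Vandermonde; apply: eq_bigr => j _.
rewrite (bigD1 j) //= eqxx muln1 big1 ?addn0 => [|k kj]; first by rewrite bin_sub // -ltnS.
by rewrite (_ : (j == k :> nat) = false) ?muln0 //; apply/negbTE; rewrite eq_sym.
Qed.

Lemma central_binS n : n.+1 * 'C(n.+1 + n.+1, n.+1) = 2 * (2 * n).+1 * 'C(n + n, n).
Proof.
(* (2n+2) C(2n+1,n) = (n+1) C(2n+2,n+1), (2n+1) C(2n,n) = (n+1) C(2n+1,n+1)
   and C(2n+1,n+1) = C(2n+1,n). *)
have top := mul_bin_diag (n + n).+2 n.
have mid := mul_bin_diag (n + n).+1 n.
have symm := @bin_sub (n + n).+1 n (leqW (leq_addl n n)).
rewrite (_ : (n + n).+1 - n = n.+1) in symm; last by lia.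
rewrite /= symm in mid; rewrite /= (_ : (n + n).+2 = n.+1 + n.+1) in top; last by lia.
nia.
Qed.

(* Splitting off the first bits: a pair of first bits contributes a distance
   of one exactly for the pairs (1,0) and (0,1). *)
Lemma pairs_gapS n : pairs_gap n.+1 = 4 * pairs_gap n + 2 * pairs_same n.
Proof.
rewrite /pairs_gap /pairs_same sum2_bitseqsS !big_distrr -big_split; apply: eq_bigr => s _.
rewrite !big_distrr -big_split; apply: eq_bigr => t _ /=.
by rewrite /distn; case: eqP => e; lia.
Qed.

Lemma pairs_gap_val n : pairs_gap n = n * 'C(n + n, n).
Proof.
elim: n => [|n IH]; first by rewrite /pairs_gap /= !big_seq1.
by rewrite pairs_gapS IH pairs_same_val central_binS; lia.
Qed.

(* The suffix counts of a string beyond position 0 are those of its tail. *)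
Lemma pairs_profile_gapS n : pairs_profile_gap n.+1 = 4 * pairs_profile_gap n + pairs_gap n.+1.
Proof.
rewrite /pairs_profile_gap /pairs_gap sum2_bitseqsS [in RHS]sum2_bitseqsS.
rewrite !big_distrr -big_split; apply: eq_bigr => s _.
rewrite !big_distrr -big_split; apply: eq_bigr => t _ /=.
rewrite !big_ord_recl /ones_from /= !add0n.
have tail : \sum_(i < n) distn (ones (drop (bump 0 i) (true :: s)))
    (ones (drop (bump 0 i) (true :: t))) = \sum_(i < n) distn (ones_from i s) (ones_from i t).
  exact: eq_bigr.
by rewrite tail; lia.
Qed.

Lemma pairs_profile_gap_val n : 3 * pairs_profile_gap n = n * (2 * n).+1 * 'C(n + n, n).
Proof.
elim: n => [|n IH]; first by rewrite /pairs_profile_gap /= !big_seq1 big_ord0.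
rewrite pairs_profile_gapS mulnDr mulnCA IH pairs_gap_val.
rewrite (_ : n.+1 * (2 * n.+1).+1 * _ =
  (2 * n.+1).+1 * (n.+1 * 'C(n.+1 + n.+1, n.+1))); last by lia.
by rewrite central_binS; nia.
Qed.

Section OrderIdeals.
Variable n : nat.
Implicit Types (I : {set pt n}) (p q : pt n).

Lemma S_stair I p : I \in S n -> p \in I -> p \in stair n.
Proof. by rewrite inE => /andP [/subsetP sub _] /sub. Qed.

Lemma S_down I p q : I \in S n -> p \in I -> q \in stair n -> le_pt q p -> q \in I.
Proof.
rewrite inE => /andP [_ /forallP down] pI qs qp.
by move: (down p) => /implyP /(_ pI) /forallP /(_ q) /implyP /(_ qs) /implyP /(_ qp).
Qed.

Lemma S_intro I : (forall p, p \in I -> p \in stair n) ->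
  (forall p q, p \in I -> q \in stair n -> le_pt q p -> q \in I) -> I \in S n.
Proof.
move=> sub down; rewrite inE; apply/andP; split; first exact/subsetP.
apply/forallP => p; apply/implyP => pI; apply/forallP => q; apply/implyP => qs.
exact/implyP/down.
Qed.

End OrderIdeals.

Lemma ones_from_split d k s : ones_from d s = ones (take k (drop d s)) + ones_from (k + d) s.
Proof. by rewrite /ones_from -drop_drop -count_cat cat_take_drop. Qed.

Lemma ones_from_mono d e s : d <= e -> ones_from e s <= ones_from d s.
Proof. by move=> de; rewrite (ones_from_split d (e - d)) subnK // leq_addl. Qed.

Lemma ones_from_lipschitz d k s : ones_from d s <= ones_from (d + k) s + k.
Proof.
rewrite (ones_from_split d k) addnC (addnC d) leq_add2l.
by apply: leq_trans (count_size _ _) _; rewrite size_take geq_minl.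
Qed.

Lemma ones_from_bound d s : ones_from d s <= size s - d.
Proof. by rewrite /ones_from -size_drop count_size. Qed.

Lemma ones_from_inj s t : size s = size t -> (forall d, ones_from d s = ones_from d t) -> s = t.
Proof.
elim: s t => [|b s IH] [|b' t] //= [st] eq_from.
have st' : s = t by apply: IH => // d; exact: (eq_from d.+1).
subst t; have first_bit := eq_from 0; rewrite /ones_from /= in first_bit.
by congr (_ :: _); clear eq_from IH; move: first_bit; case: b; case: b' => /=; lia.
Qed.

Definition ideal_of (n : nat) (s : bitseq) : {set pt n} :=
  [set p : pt n | (p.1 <= p.2) && (p.1 < ones_from (p.2 - p.1) s)].

(* The cells of ideal_of n s below a cell (p1, p2) lie on diagonals whose
   counts are large enough, by monotonicity and the unit-step bound. *)
Lemma ideal_of_in_S n s : ideal_of n s \in S n.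
Proof.
apply: S_intro => [p|[p1 p2] [q1 q2]]; first by rewrite !inE => /andP [].
rewrite !inE /le_pt /= => /andP [p12 p1_lt] q12 /andP [qp1 qp2]; rewrite q12 /=.
have mono := @ones_from_mono (q2 - q1) (p2 - q1) s.
have lip := ones_from_lipschitz (p2 - p1) (p1 - q1) s.
rewrite (_ : p2 - p1 + (p1 - q1) = p2 - q1) in lip; last by lia.
by have := mono ltac:(lia); lia.
Qed.

(* Diagonal d of ideal_of n s has exactly ones_from d s cells. *)
Lemma ideal_of_inj n s t : size s = n -> size t = n -> ideal_of n s = ideal_of n t -> s = t.
Proof.
move=> sn tn st; apply: ones_from_inj => [|d]; first by rewrite sn tn.
have bs := ones_from_bound d s; have bt := ones_from_bound d t.
rewrite sn in bs; rewrite tn in bt.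
case: (ltnP d n) => dn; last by lia.
have same i : i + d < n -> (i < ones_from d s) = (i < ones_from d t).
  move=> idn; have i_n : i < n by lia.
  have := congr1 (fun A : {set pt n} => ((Ordinal i_n, Ordinal idn) : pt n) \in A) st.
  by rewrite !inE /= leq_addr addKn.
case: (ltngtP (ones_from d s) (ones_from d t)) => // lt.
- by have := same (ones_from d s) ltac:(lia); rewrite ltnn lt.
- by have := same (ones_from d t) ltac:(lia); rewrite ltnn lt.
Qed.

Lemma downclosed_initial (P : pred nat) n :
  (forall i j, j <= i -> P i -> P j) -> (forall i, P i -> i < n) ->
  forall i, P i = (i < \sum_(j < n) P j).
Proof.
elim: n P => [|n IH] P down bound i.
  by rewrite big_ord0; apply/negbTE/negP => /bound.
rewrite big_ord_recr /=; case Pn: (P n).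
  have all_lt j : j < n.+1 -> P j by move=> jn; apply: (down n) => //; lia.
  rewrite (eq_bigr (fun _ => 1)) => [|j _]; last by rewrite all_lt //; exact: leqW.
  by rewrite sum1_card card_ord addn1; apply/idP/idP => [/bound|/all_lt].
rewrite addn0; apply: IH => // j Pj.
by have := bound _ Pj; rewrite ltnS leq_eqVlt => /predU1P [ej|//]; rewrite ej Pn in Pj.
Qed.

Lemma count_descents (f : nat -> nat) a m :
  (forall d, f d.+1 <= f d) -> (forall d, f d <= (f d.+1).+1) ->
  count id [seq f d.+1 < f d | d <- iota a m] = f a - f (a + m).
Proof.
move=> noninc step; elim: m a => [|m IH] a; first by rewrite addn0 subnn.
have decr k : f (a.+1 + k) <= f a.+1.
  by elim: k => [|k IHk]; rewrite ?addn0 // addnS (leq_trans (noninc _)).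
by rewrite /= IH; have := decr m; have := noninc a; have := step a; rewrite addSnnS; lia.
Qed.

(* Every order ideal I is of the form ideal_of n s: its diagonal lengths are
   nonincreasing with unit steps, so they are the suffix counts of the string
   of their descents. *)
Section Surjectivity.
Variables (n : nat) (I : {set pt n}).
Hypothesis I_S : I \in S n.

Definition cell (i j : nat) : bool :=
  [exists p in I, (p.1 == i :> nat) && (p.2 == j :> nat)].

Lemma cell_bound i j : cell i j -> (i <= j) && (j < n).
Proof.
case/existsP => -[p1 p2] /and3P [pI /eqP <- /eqP <-].
by have := S_stair I_S pI; rewrite inE /= => ->; rewrite ltn_ord.
Qed.

Lemma cell_down i j i' j' : cell i j -> i' <= i -> j' <= j -> i' <= j' -> cell i' j'.
Proof.
move=> ij; have /andP [_ jn] := cell_bound ij.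
case/existsP: ij => p /and3P [pI /eqP p1 /eqP p2] ii' jj' ij'.
have i'n : i' < n by lia.
have j'n : j' < n by lia.
apply/existsP; exists ((Ordinal i'n, Ordinal j'n) : pt n); rewrite !eqxx !andbT.
by apply: (S_down I_S pI); rewrite ?inE // /le_pt p1 p2 ii' jj'.
Qed.

Lemma cellE (p : pt n) : cell p.1 p.2 = (p \in I).
Proof.
apply/idP/idP => [/existsP [q /and3P [qI e1 e2]]|pI];
  last by apply/existsP; exists p; rewrite pI !eqxx.
by rewrite (_ : p = q) // [p]surjective_pairing [q]surjective_pairing;
  congr (_, _); apply: ord_inj; apply/esym/eqP.
Qed.

Definition diag_len (d : nat) : nat := \sum_(i < n) cell i (i + d).

Lemma diag_lenP d i : cell i (i + d) = (i < diag_len d).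
Proof.
apply: (downclosed_initial (P := fun i => cell i (i + d))) => [a b ba|a /cell_bound]; last by lia.
by move/cell_down; apply; lia.
Qed.

Lemma diag_len_noninc d : diag_len d.+1 <= diag_len d.
Proof.
case E: (diag_len d.+1) => [//|k].
have : k < diag_len d.+1 by lia.
by rewrite -diag_lenP -(diag_lenP d) => /cell_down; apply; lia.
Qed.

Lemma diag_len_step d : diag_len d <= (diag_len d.+1).+1.
Proof.
case E: (diag_len d) => [|[|k]] //.
have : k.+1 < diag_len d by lia.
rewrite -diag_lenP => ck.
have : cell k (k + d.+1) by apply: (cell_down ck); lia.
by rewrite diag_lenP; lia.
Qed.

Lemma diag_len_out d : n <= d -> diag_len d = 0.
Proof.
move=> nd; case E: (diag_len d) => [//|k].
have : 0 < diag_len d by lia.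
by rewrite -diag_lenP => /cell_bound; lia.
Qed.

Lemma ideal_of_surj : exists2 s, size s = n & ideal_of n s = I.
Proof.
pose s := mkseq (fun d => diag_len d.+1 < diag_len d) n.
have ones_fromE d : ones_from d s = diag_len d.
  case: (leqP n d) => nd; first by rewrite diag_len_out // /ones_from drop_oversize // size_mkseq.
  rewrite /ones_from /s /mkseq -map_drop drop_iota add0n count_descents.
  - by rewrite subnKC ?(ltnW nd) // (diag_len_out (leqnn n)) subn0.
  - exact: diag_len_noninc.
  - exact: diag_len_step.
exists s; first by rewrite size_mkseq.
apply/setP => p; rewrite inE ones_fromE -cellE.
case: (leqP p.1 p.2) => p12; first by rewrite -diag_lenP subnKC.
by rewrite andFb; apply/esym/negbTE/negP => /cell_bound /andP [+ _]; rewrite leqNgt p12.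
Qed.

End Surjectivity.

Definition symd (T : finType) (A B : {set T}) : {set T} := [set x | (x \in A) != (x \in B)].

Section SymmetricDifference.
Variable T : finType.
Implicit Types A B C : {set T}.

Lemma symdC A B : symd A B = symd B A.
Proof. by apply/setP => x; rewrite !inE eq_sym. Qed.

Lemma symdss A : symd A A = set0.
Proof. by apply/setP => x; rewrite !inE eqxx. Qed.

Lemma card_symd A B : #|symd A B| = #|A :\: B| + #|B :\: A|.
Proof.
have -> : symd A B = (A :\: B) :|: (B :\: A).
  by apply/setP => x; rewrite !inE; case: (x \in A); case: (x \in B).
rewrite cardsU (_ : _ :&: _ = set0) ?cards0 ?subn0 //.
by apply/setP => x; rewrite !inE; case: (x \in A); case: (x \in B).
Qed.

Lemma symd_triangle A B C : #|symd A C| <= #|symd A B| + #|symd B C|.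
Proof.
have sub : symd A C \subset symd A B :|: symd B C.
  by apply/subsetP => x; rewrite !inE; case: (x \in A); case: (x \in B); case: (x \in C).
by apply: leq_trans (subset_leq_card sub) _; rewrite -cardsUI leq_addr.
Qed.

End SymmetricDifference.

Lemma count_xor_lt m a b : a <= m -> b <= m ->
  \sum_(0 <= i < m) ((i < a) != (i < b) : nat) = distn a b.
Proof.
elim: m a b => [|m IH] a b am bm; first by rewrite big_geq // /distn; lia.
rewrite big_nat_recr //=
  (@eq_big_nat _ _ _ 0 m _ (fun i => ((i < minn a m) != (i < minn b m) : nat))).
  by rewrite IH ?geq_minr // /distn; case: (ltnP m a); case: (ltnP m b) => /=; lia.
by move=> i /andP [_ im]; congr (nat_of_bool (_ != _)); apply/idP/idP; lia.
Qed.

Lemma sum_by_diagonals n (f : nat -> nat -> nat) :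
  \sum_(0 <= i < n) \sum_(0 <= j < n) (i <= j) * f i (j - i) =
  \sum_(0 <= d < n) \sum_(0 <= i < n - d) f i d.
Proof.
elim: n => [|n IH]; first by rewrite !big_geq.
have last_col : \sum_(0 <= i < n.+1) \sum_(0 <= j < n.+1) (i <= j) * f i (j - i) =
    \sum_(0 <= i < n) \sum_(0 <= j < n) (i <= j) * f i (j - i) + \sum_(0 <= i < n.+1) f i (n - i).
  have last_row : \sum_(0 <= j < n.+1) (n <= j) * f n (j - n) = f n 0.
    rewrite big_nat_recr //= big1_seq ?leqnn ?subnn ?mul1n ?add0n //.
    by move=> j; rewrite mem_index_iota => /andP [_ /andP [_ jn]]; rewrite leqNgt jn.
  rewrite big_nat_recr //= last_row [in RHS]big_nat_recr //= subnn addnA; congr (_ + _).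
  rewrite -big_split /=; apply: eq_big_nat => i /andP [_ i_n].
  by rewrite big_nat_recr //= (ltnW i_n) mul1n.
have last_diag : \sum_(0 <= d < n.+1) \sum_(0 <= i < n.+1 - d) f i d =
    \sum_(0 <= d < n) \sum_(0 <= i < n - d) f i d + \sum_(0 <= d < n.+1) f (n - d) d.
  rewrite big_nat_recr //= subSnn big_nat1 (big_nat_recr n) //= subnn addnA; congr (_ + _).
  rewrite -big_split /=; apply: eq_big_nat => d /andP [_ dn].
  by rewrite (subSn (ltnW dn)) big_nat_recr // (ltnW dn).
rewrite last_col last_diag IH; congr (_ + _).
by rewrite big_nat_rev /=; apply: eq_big_nat => i /andP [_ i_n]; rewrite add0n subSS subKn.
Qed.

Lemma card_symd_ideal_of n s t : size s = n -> size t = n ->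
  #|symd (ideal_of n s) (ideal_of n t)| = \sum_(d < n) distn (ones_from d s) (ones_from d t).
Proof.
move=> sn tn.
pose f i d := ((i < ones_from d s) != (i < ones_from d t) : nat).
pose in_symd (i j : 'I_n) := (((i, j) : pt n) \in symd (ideal_of n s) (ideal_of n t) : nat).
transitivity (\sum_(0 <= i < n) \sum_(0 <= j < n) (i <= j) * f i (j - i)).
  rewrite -sum1_card big_mkcond /= (eq_bigr (fun p : pt n => in_symd p.1 p.2)) => [|[i j] _];
    last by rewrite /in_symd; case: (_ \in _).
  rewrite -(pair_bigA _ in_symd) big_mkord; apply: eq_bigr => i _.
  rewrite big_mkord; apply: eq_bigr => j _.
  by rewrite /in_symd /f !inE /=; case: (i <= j); rewrite ?mul1n ?mul0n.
rewrite sum_by_diagonals big_mkord; apply: eq_bigr => d _.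
by apply: count_xor_lt; [rewrite -{2}sn | rewrite -{2}tn]; apply: ones_from_bound.
Qed.

(* The Hasse diagram of S_n: covers add exactly one cell, and any two ideals
   are joined by a walk through their intersection, one cell at a time. *)
Section HasseDistance.
Variable n : nat.
Implicit Types (I J A B : {set pt n}) (p q : pt n).

Lemma S_setI I J : I \in S n -> J \in S n -> I :&: J \in S n.
Proof.
move=> I_S J_S; apply: S_intro => [p /setIP [pI _]|p q /setIP [pI pJ] qs qp].
  exact: S_stair I_S pI.
by rewrite inE (S_down I_S pI qs qp) (S_down J_S pJ qs qp).
Qed.

(* A cell of B \ A of least rank i + j can be added to A. *)
Lemma proper_extend A B : A \in S n -> B \in S n -> A \proper B ->
  exists2 p, (p \in B) && (p \notin A) & p |: A \in S n.
Proof.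
move=> A_S B_S /properP [_ [p0 p0B p0A]].
have p0_new : (p0 \in B) && (p0 \notin A) by rewrite p0B p0A.
case: (@arg_minnP _ p0 (fun p : pt n => (p \in B) && (p \notin A)) (fun p => p.1 + p.2) p0_new)
  => p /andP [pB pA] p_min.
exists p; first by rewrite pB pA.
apply: S_intro => [x /setU1P [->|xA]|x q /setU1P [->|xA] qs qx].
- exact: S_stair B_S pB.
- exact: S_stair A_S xA.
- apply/setU1P; case qA: (q \in A); [by right | left].
  have := p_min q; rewrite (S_down B_S pB qs qx) qA => /(_ isT).
  case: p q qx {p_min pB pA qA qs} => [p1 p2] [q1 q2]; rewrite /le_pt /= => /andP [le1 le2] le.
  by congr (_, _); apply: ord_inj; lia.
- by rewrite setU1r // (S_down A_S xA qs qx).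
Qed.

Lemma covers_add A p : A \in S n -> p \notin A -> p |: A \in S n -> covers A (p |: A).
Proof.
move=> A_S pA pA_S; rewrite /covers A_S pA_S /=.
have AsubpA : A \proper p |: A by rewrite properUr // sub1set.
rewrite AsubpA /=; apply/existsP => -[K /andP [_ /andP [AK KpA]]].
by have := proper_card AK; have := proper_card KpA; rewrite cardsU1 pA; lia.
Qed.

(* Conversely a cover adds exactly one cell: otherwise adding a minimal new
   cell would give an ideal strictly in between. *)
Lemma covers_symd I J : covers I J -> #|symd I J| = 1.
Proof.
case/and4P => I_S J_S IJ no_between.
case: (proper_extend I_S J_S IJ) => p /andP [pJ pI] pI_S.
have pI_J : p |: I \subset J by rewrite subUset sub1set pJ proper_sub.
case: (eqVneq (p |: I) J) => [<-|ne].
  rewrite (_ : symd I (p |: I) = [set p]) ?cards1 //.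
  apply/setP => x; rewrite !inE; case: (eqVneq x p) => [->|_]; first by rewrite (negbTE pI).
  by case: (x \in I).
case/negP: no_between; apply/existsP; exists (p |: I).
by rewrite pI_S properUr ?sub1set // properEneq ne pI_J.
Qed.

Lemma walk_up k A B : A \in S n -> B \in S n -> A \subset B -> #|B :\: A| = k ->
  exists P : seq {set pt n}, [/\ size P = k, path (@hasse_adj n) A P & last A P = B].
Proof.
elim: k A => [|k IH] A A_S B_S AB card_BA.
  exists [::]; split => //=; apply/eqP; rewrite eqEsubset AB -setD_eq0.
  by apply/eqP/cards0_eq.
have AneB : A != B by apply: contra_eqN card_BA => /eqP ->; rewrite setDv cards0.
have AB' : A \proper B by rewrite properEneq AneB AB.
case: (proper_extend A_S B_S AB') => p /andP [pB pA] pA_S.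
have pA_B : p |: A \subset B by rewrite subUset sub1set pB AB.
have card' : #|B :\: (p |: A)| = k.
  have -> : B :\: (p |: A) = (B :\: A) :\ p.
    by apply/setP => x; rewrite !inE; case: (x == p); rewrite ?andbF ?andbT.
  by move: card_BA; rewrite (cardsD1 p) !inE pB pA; lia.
case: (IH _ pA_S B_S pA_B card') => P [sizeP pathP lastP].
by exists (p |: A :: P); rewrite /= sizeP pathP lastP /hasse_adj covers_add.
Qed.

Lemma hasse_adj_sym : symmetric (@hasse_adj n).
Proof. by move=> I J; rewrite /hasse_adj orbC. Qed.

(* Down from I to I :&: J, then up to J. *)
Lemma walk_symd I J : I \in S n -> J \in S n ->
  exists P : seq {set pt n}, [/\ size P = #|symd I J|, path (@hasse_adj n) I P & last I P = J].
Proof.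
move=> I_S J_S; have IJ_S := S_setI I_S J_S.
have [P1 [size1 path1 last1]] := walk_up IJ_S I_S (subsetIl I J) (erefl _).
have [P2 [size2 path2 last2]] := walk_up IJ_S J_S (subsetIr I J) (erefl _).
have back : last (last (I :&: J) P1) (rev (belast (I :&: J) P1)) = I :&: J.
  by case: (P1) => [|x P] //=; rewrite rev_cons last_rcons.
rewrite last1 in back.
exists (rev (belast (I :&: J) P1) ++ P2); split.
- by rewrite size_cat size_rev size_belast size1 size2 card_symd setDIr setDv set0U
    setDIr setDv setU0.
- rewrite cat_path -{1}last1 rev_path (@eq_path _ _ (@hasse_adj n)) => [|K L];
    last exact: hasse_adj_sym.
  by rewrite path1 back path2.
- by rewrite last_cat back last2.
Qed.

(* Each edge changes the symmetric difference with a fixed ideal by one. *)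
Lemma walk_length_lb I P : path (@hasse_adj n) I P -> #|symd I (last I P)| <= size P.
Proof.
elim: P I => [|J P IH] I /=; first by rewrite symdss cards0.
case/andP => IJ JP; apply: leq_trans (symd_triangle I J _) _.
rewrite (_ : #|symd I J| = 1) ?add1n ?ltnS ?IH //.
by case/orP: IJ => /covers_symd //; rewrite symdC.
Qed.

End HasseDistance.

Lemma find_iota (P : pred nat) a N m : a <= m < a + N -> P m ->
  (forall k, a <= k < m -> ~~ P k) -> find P (iota a N) = m - a.
Proof.
elim: N a => [|N IH] a am Pm before; first by lia.
rewrite /=; case: (eqVneq a m) => [->|ne]; first by rewrite Pm subnn.
rewrite (negbTE (before a _)); last by lia.
by rewrite IH //; [lia | lia | move=> k ak; apply: before; lia].
Qed.

(* The Hasse distance is the size of the symmetric difference (the bound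
   ensures that the search range of hdist is large enough). *)
Lemma hdist_symd n (I J : {set pt n}) : I \in S n -> J \in S n -> #|symd I J| < #|S n| ->
  hdist I J = #|symd I J|.
Proof.
move=> I_S J_S small; rewrite /hdist (@find_iota _ 0 _ #|symd I J|) ?subn0 //.
- have [P [sizeP pathP lastP]] := walk_symd I_S J_S.
  apply/existsP; exists (Tuple (introT eqP sizeP)).
  by rewrite /= pathP lastP eqxx.
- move=> k /andP [_ short]; apply/existsP => -[P /andP [pathP /eqP lastP]].
  by have := walk_length_lb pathP; rewrite lastP size_tuple; lia.
Qed.

Lemma perm_S_bitseqs n : perm_eq (enum (S n)) (map (ideal_of n) (bitseqs n)).
Proof.
apply: uniq_perm; first exact: enum_uniq.
  rewrite map_inj_in_uniq ?uniq_bitseqs // => s t.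
  by rewrite !mem_bitseqs => /eqP sn /eqP tn; apply: ideal_of_inj.
move=> I; rewrite mem_enum; apply/idP/mapP => [I_S|[s _ ->]]; last exact: ideal_of_in_S.
by have [s sn <-] := ideal_of_surj I_S; exists s; rewrite ?mem_bitseqs ?sn.
Qed.

Lemma sum_S n (F : {set pt n} -> nat) :
  \sum_(I in S n) F I = \sum_(s <- bitseqs n) F (ideal_of n s).
Proof. by rewrite -big_enum (perm_big _ (perm_S_bitseqs n)) big_map. Qed.

Lemma card_S n : #|S n| = 2 ^ n.
Proof. by rewrite cardE (perm_size (perm_S_bitseqs n)) size_map size_bitseqs. Qed.

(* The largest possible distance, the number of cells, is below 2 ^ n. *)
Lemma triangle_lt_pow2 n : \sum_(d < n) (n - d) < 2 ^ n.
Proof.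
elim: n => [|n IH]; first by rewrite big_ord0.
rewrite big_ord_recl subn0 (eq_bigr (fun d : 'I_n => n - d)) => [|d _]; last by rewrite subSS.
have := ltn_expl n (isT : 1 < 2); rewrite expnS; move: IH.
by set X := \sum_(i < n) _; lia.
Qed.

Lemma wiener_S_profile n : wiener_S n = pairs_profile_gap n.
Proof.
rewrite /wiener_S sum_S /pairs_profile_gap; apply: eq_big_seq => s.
rewrite mem_bitseqs => /eqP sn; rewrite sum_S; apply: eq_big_seq => t.
rewrite mem_bitseqs => /eqP tn.
rewrite -card_symd_ideal_of // hdist_symd ?ideal_of_in_S // card_S card_symd_ideal_of //.
apply: leq_ltn_trans (triangle_lt_pow2 n); apply: leq_sum => d _.
by have := ones_from_bound d s; have := ones_from_bound d t; rewrite sn tn /distn; lia.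
Qed.

Lemma wiener_S_closed n : 3 * wiener_S n = n * (2 * n).+1 * 'C(n + n, n).
Proof. by rewrite wiener_S_profile pairs_profile_gap_val. Qed.

Lemma wiener_S0 : wiener_S 0 = 0.
Proof. by have := wiener_S_closed 0; lia. Qed.

Lemma wiener_S1 : wiener_S 1 = 2.
Proof. by have := wiener_S_closed 1; rewrite /= (_ : 'C(2, 1) = 2) //; lia. Qed.

Lemma wiener_S_rec n : n.+1 * wiener_S n.+2 = (4 * n + 10) * wiener_S n.+1.
Proof.
apply/eqP; rewrite -(eqn_pmul2l (isT : 0 < 3)); apply/eqP.
rewrite mulnCA wiener_S_closed [RHS]mulnCA wiener_S_closed.
rewrite (_ : n.+1 * (n.+2 * _ * _) = n.+1 * (2 * n.+2).+1 * (n.+2 * 'C(n.+2 + n.+2, n.+2)));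
  last by lia.
by rewrite central_binS; nia.
Qed.

From Stdlib Require Import Reals Lra.
From Coquelicot Require Import Coquelicot.
Open Scope R_scope.

(* Coefficients of sum_n d(S_n) x^(n-1); d(S_0) = 0, so the generating
   function is x times this power series. *)
Definition wcoef (k : nat) : R := INR (wiener_S k.+1).

Lemma wcoef0 : wcoef 0 = 2.
Proof. by rewrite /wcoef wiener_S1 /=; lra. Qed.

Lemma wcoef_rec k : INR k.+1 * wcoef k.+1 = (4 * INR k + 10) * wcoef k.
Proof.
have := f_equal INR (wiener_S_rec k); rewrite -!multE -!plusE !mult_INR plus_INR mult_INR.
by rewrite /wcoef /= => ->; ring.
Qed.

Lemma wcoef_pos k : 0 < wcoef k.
Proof.
elim: k => [|k IH]; first by rewrite wcoef0; lra.
have := wcoef_rec k; have := pos_INR k; have : 0 < INR k.+1 by apply: lt_0_INR; lia.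
nra.
Qed.

Lemma wcoef_ratio k : Rabs (wcoef k.+1 / wcoef k) = 4 + 6 * / INR k.+1.
Proof.
have k1 : 0 < INR k.+1 by apply: lt_0_INR; lia.
have rec := wcoef_rec k; have pos := wcoef_pos k; have pos' := wcoef_pos k.+1.
rewrite Rabs_pos_eq; last by apply/Rlt_le/Rdiv_lt_0_compat.
apply: (Rmult_eq_reg_l (INR k.+1 * wcoef k)); last by nra.
by field_simplify; try lra; rewrite S_INR in rec |- *; nra.
Qed.

Lemma wcoef_radius : CV_radius wcoef = Finite (/ 4).
Proof.
apply: CV_radius_finite_DAlembert => [k||]; [by have := wcoef_pos k; lra | lra |].
apply: (is_lim_seq_ext (fun k => 4 + 6 * / INR k.+1)) => [k|]; first by rewrite wcoef_ratio.
have inv : is_lim_seq (fun k => / INR k.+1) 0.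
  apply: (is_lim_seq_inv _ p_infty) => //.
  by apply (is_lim_seq_incr_1 INR p_infty); exact: is_lim_seq_INR.
have := is_lim_seq_plus' _ _ 4 (6 * 0) (is_lim_seq_const 4) (is_lim_seq_scal_l _ 6 _ inv).
by rewrite Rmult_0_r Rplus_0_r.
Qed.

Lemma wcoef_inside c : Rabs c < / 4 -> Rbar_lt (Rabs c) (CV_radius wcoef).
Proof. by rewrite wcoef_radius. Qed.

(* The recurrence as a differential equation: (1 - 4x) V' = 10 V. *)
Lemma wcoef_ode c : Rabs c < / 4 ->
  PSeries (PS_derive wcoef) c * (1 - 4 * c) = 10 * PSeries wcoef c.
Proof.
move=> hc; have inside := wcoef_inside hc.
have split_deriv k : PS_derive wcoef k =
    PS_plus (PS_scal 4 (fun k => INR k * wcoef k)) (PS_scal 10 wcoef) k.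
  rewrite /PS_derive wcoef_rec /PS_plus /PS_scal /plus /scal /= /mult /=; ring.
have shift k : PS_incr_1 (PS_derive wcoef) k = INR k * wcoef k.
  by case: k => [|k] /=; rewrite ?Rmult_0_l.
have ex_euler : ex_pseries (fun k => INR k * wcoef k) c.
  by apply: (ex_pseries_ext _ _ _ shift); apply/ex_pseries_incr_1/ex_pseries_derive.
have euler : PSeries (fun k => INR k * wcoef k) c = c * PSeries (PS_derive wcoef) c.
  by rewrite -(PSeries_ext _ _ _ shift) PSeries_incr_1.
have D_eq : PSeries (PS_derive wcoef) c =
    4 * (c * PSeries (PS_derive wcoef) c) + 10 * PSeries wcoef c.
  rewrite {1}(PSeries_ext _ _ _ split_deriv) PSeries_plus ?PSeries_scal ?euler //.
  - by apply: ex_pseries_scal => //; rewrite /mult /=; ring.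
  - by apply: ex_pseries_scal => //; [rewrite /mult /=; ring | exact: CV_radius_inside].
rewrite (_ : PSeries (PS_derive wcoef) c * (1 - 4 * c) =
  PSeries (PS_derive wcoef) c - 4 * (c * PSeries (PS_derive wcoef) c)); last by ring.
by rewrite {1}D_eq; ring.
Qed.

(* Hence V(x) (1 - 4x)^(5/2) has zero derivative on (-1/4, 1/4): the derivative
   is (1 - 4x)^(3/2) ((1 - 4x) V' - 10 V). *)
Lemma wseries_scaled_deriv c : Rabs c < / 4 ->
  is_derive (fun c => PSeries wcoef c * sqrt (1 - 4 * c) ^ 5) c 0.
Proof.
move=> hc; have c_pos : 0 < 1 - 4 * c by have := Rle_abs c; lra.
have dV := is_derive_PSeries _ _ (wcoef_inside hc).
have dlin : is_derive (fun c => 1 - 4 * c) c (-4) by auto_derive => //; ring.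
have dVs := Derive.is_derive_mult _ _ _ _ _ dV
  (is_derive_pow _ 5 _ _ (is_derive_sqrt _ _ _ dlin c_pos)).
suff vanish : PSeries (PS_derive wcoef) c * sqrt (1 - 4 * c) ^ 5 + PSeries wcoef c *
    (INR 5 * (-4 / (2 * sqrt (1 - 4 * c))) * sqrt (1 - 4 * c) ^ Init.Nat.pred 5) = 0.
  by rewrite vanish in dVs.
have ode := wcoef_ode hc; have sq := sqrt_sqrt _ (Rlt_le _ _ c_pos).
have s_pos := sqrt_lt_R0 _ c_pos; move: ode sq s_pos; move: (sqrt (1 - 4 * c)) => s ode sq s_pos.
rewrite (_ : INR 5 * (-4 / (2 * s)) * s ^ Init.Nat.pred 5 = -10 * s ^ 3); last by simpl; field; lra.
rewrite (_ : _ + _ = s ^ 3 * (PSeries (PS_derive wcoef) c * (s * s) - 10 * PSeries wcoef c));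
  last by ring.
by rewrite sq ode; ring.
Qed.

(* By the mean value theorem, V(x) (1 - 4x)^(5/2) = V(0) = 2. *)
Lemma wseries_closed x : Rabs x < / 4 -> PSeries wcoef x * sqrt (1 - 4 * x) ^ 5 = 2.
Proof.
move=> hx; pose h c := PSeries wcoef c * sqrt (1 - 4 * c) ^ 5.
have dh c : Rabs (c - 0) <= Rabs x -> is_derive h c 0.
  by rewrite Rminus_0_r => cx; apply: wseries_scaled_deriv; lra.
have [c [hc _]] := MVT_cor4 h (fun _ => 0) 0 (Rabs x) dh x ltac:(rewrite Rminus_0_r; lra).
have h0 : h 0 = 2 by rewrite /h PSeries_0 wcoef0 Rmult_0_r Rminus_0_r sqrt_1; ring.
by rewrite /h in hc h0 |- *; lra.
Qed.

Lemma gf_rational_form x : Rabs x < / 4 ->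
  x * (2 / sqrt (1 - 4 * x) ^ 5) =
  8 * x * (1 + sqrt (1 - 4 * x) - x * (3 + sqrt (1 - 4 * x)))
    / ((1 - 4 * x) * (1 - 4 * x + sqrt (1 - 4 * x)) ^ 3).
Proof.
move=> hx; have x_pos : 0 < 1 - 4 * x by have := Rle_abs x; lra.
have sq := sqrt_sqrt _ (Rlt_le _ _ x_pos); have s_pos := sqrt_lt_R0 _ x_pos.
move: sq s_pos; move: (sqrt (1 - 4 * x)) => s sq s_pos.
rewrite (_ : x = (1 - s * s) / 4) -?sq; last by lra.
by field; split; nra.
Qed.

Theorem theorem1p5 (x : R) :
  Rabs x < / 4 ->
  infinite_sum (fun n : nat => INR (wiener_S n) * x ^ n)
    (8 * x * (1 + sqrt (1 - 4 * x) - x * (3 + sqrt (1 - 4 * x)))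
     / ((1 - 4 * x) * (1 - 4 * x + sqrt (1 - 4 * x)) ^ 3)).
Proof.
move=> hx; apply/is_series_Reals.
have V_def := PSeries_correct _ _ (CV_radius_inside _ _ (wcoef_inside hx)).
have xV := proj1 (is_pseries_R _ _ _) (is_pseries_incr_1 _ _ _ V_def).
rewrite -gf_rational_form // -(wseries_closed hx).
have s_pos : 0 < sqrt (1 - 4 * x) by apply: sqrt_lt_R0; have := Rle_abs x; lra.
rewrite (_ : x * _ = scal x (PSeries wcoef x)); last by rewrite /scal /= /mult /=; field; lra.
apply: is_series_ext xV => -[|k] /=; last by [].
by rewrite wiener_S0 /zero /=; ring.
Qed.
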